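(* Let $C>1$, $P$ a probability measure on $[0,\infty)$ with $\mu_{P,C}>0$, and $\alpha>0$ such that $\alpha\,\mu_{P,C}\le\mathbb{E}_{t\sim P}\big[t\,\mathbf 1[t<m_P]\big]$. Then: (a) $G_{P,C}(\mu)\ge\alpha\mu$ for $0\le\mu\le\frac{\mu_{P,C}}2$; (b) $G_{P,C}(\mu)\ge\alpha(\mu_{P,C}-\mu)$ for $\frac{\mu_{P,C}}2\le\mu\le\mu_{P,C}$; (c) $G_{P,C}(\mu)\le-\alpha(\mu-\mu_{P,C})$ for $\mu\ge\mu_{P,C}$.
   Context: For $\mu\ge0$ define $G_{P,C}(\mu):=\mathbb{E}_{t\sim P}[\min\{t,C\mu\}]-\mu$. The $C$-clipped mean $\mu_{P,C}$ is the largest $\mu\ge0$ with $G_{P,C}(\mu)=0$. The $\frac1C$-median is $m_P:=\sup\{M\ge0:\mathbb{P}_{t\sim P}[t\ge M]\ge\frac1C\}$. *)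

From HB Require Import structures.
From mathcomp Require Import all_boot all_order all_algebra.
From mathcomp Require Import all_classical all_reals all_analysis.
Set Implicit Arguments. Unset Strict Implicit. Unset Printing Implicit Defensive.
Import Order.TTheory GRing.Theory Num.Theory.
Local Open Scope classical_set_scope.
Local Open Scope ring_scope.

(* P is a probability measure on the Borel sets of R; "P on [0,oo)" is
   expressed by the hypothesis P `]-oo, 0[ = 0. *)

Definition Gclip {R : realType} (P : probability R R) (C mu : R) : \bar R :=
  (\int[P]_(t in setT) (Order.min t (C * mu))%:E - mu%:E)%E.

Definition is_clipped_mean {R : realType} (P : probability R R) (C m : R) : Prop :=
  0 <= m /\ Gclip P C m = 0%E /\
  (forall mu : R, 0 <= mu -> Gclip P C mu = 0%E -> mu <= m).

Definition inv_median {R : realType} (P : probability R R) (C : R) : R :=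
  sup [set M : R | 0 <= M /\ ((C^-1)%:E <= P `[M, +oo[%classic)%E].

From HB Require Import structures.
From mathcomp Require Import all_boot all_order all_algebra.
From mathcomp Require Import all_classical all_reals all_analysis.
From mathcomp Require Import lra measurable_realfun.
Set Implicit Arguments. Unset Strict Implicit. Unset Printing Implicit Defensive.
Import Order.TTheory GRing.Theory Num.Theory.
Local Open Scope classical_set_scope.
Local Open Scope ring_scope.

(* Write f(mu) = E[min(t, C mu)], so that G(mu) = f(mu) - mu and f(mu* ) = mu*
   for the clipped mean mu*.  As min(t, C mu) / mu is nonincreasing in mu, so
   is f(mu) / mu; hence f(mu) <= mu beyond mu*, and the maximality of mu* forces
   P[t >= M] < 1/C for all M > C mu*, i.e. m_P <= C mu*.  Together with
   P[t >= m_P] >= 1/C and E[t 1(t < m_P)] >= alpha mu*, pointwise comparisons of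
   integrands give (1 + alpha) mu* <= 2 f(mu*/2) and
   C mu* P[t > C mu*] <= (1 - alpha) mu*.  Then (a) follows by monotonicity of
   f(mu) / mu, (b) by concavity of f between mu*/2 and mu*, and (c) from
   f(mu) <= f(mu* ) + C (mu - mu* ) P[t > C mu*]. *)

Definition ind_ge {R : realType} (M s : R) : R := if M <= s then 1 else 0.
Definition ind_gt {R : realType} (M s : R) : R := if M < s then 1 else 0.
Definition id_lt {R : realType} (m s : R) : R := if s < m then s else 0.

Definition bounded_mfun_nonneg {R : realType} (h : R -> R) : Prop :=
  measurable_fun setT h /\ exists K : R, forall s, 0 <= s -> `|h s| <= K.

Section bounded_mfun_nonneg.
Context {R : realType}.
Implicit Types (h : R -> R) (c M : R).

Lemma bounded_mfun_nonnegD h1 h2 : bounded_mfun_nonneg h1 -> bounded_mfun_nonneg h2 ->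
  bounded_mfun_nonneg (fun s => h1 s + h2 s).
Proof.
move=> [m1 [K1 H1]] [m2 [K2 H2]]; split; first exact: measurable_funD.
by exists (K1 + K2) => s s0; rewrite (le_trans (ler_normD _ _)) ?lerD ?H1 ?H2.
Qed.

Lemma bounded_mfun_nonnegZ c h : bounded_mfun_nonneg h ->
  bounded_mfun_nonneg (fun s => c * h s).
Proof.
move=> [mh [K HK]]; split; first exact: measurable_funM.
by exists (`|c| * K) => s s0; rewrite normrM ler_wpM2l ?HK.
Qed.

Lemma bounded_mfun_nonneg_cst c : bounded_mfun_nonneg (fun _ => c).
Proof. by split; [exact: measurable_cst|exists `|c|]. Qed.

Lemma bounded_mfun_nonneg_min c : bounded_mfun_nonneg (fun s => Order.min s c).
Proof.
split; first exact: measurable_minr.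
exists `|c| => s s0; have [sc|cs] := leP s c; last by [].
by rewrite ger0_norm // (le_trans sc) ?ler_norm.
Qed.

Lemma bounded_mfun_nonneg_ind_ge M : bounded_mfun_nonneg (ind_ge M).
Proof.
split; first by apply: measurable_fun_ifT => //; exact: measurable_fun_ler.
by exists 1 => s _; rewrite /ind_ge; case: ifP; rewrite ?normr1 ?normr0.
Qed.

Lemma bounded_mfun_nonneg_ind_gt M : bounded_mfun_nonneg (ind_gt M).
Proof.
split; first by apply: measurable_fun_ifT => //; exact: measurable_fun_ltr.
by exists 1 => s _; rewrite /ind_gt; case: ifP; rewrite ?normr1 ?normr0.
Qed.

Lemma bounded_mfun_nonneg_id_lt M : bounded_mfun_nonneg (id_lt M).
Proof.
split; first by apply: measurable_fun_ifT => //; exact: measurable_fun_ltr.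
exists `|M| => s s0; rewrite /id_lt; case: ifPn => sM; last by rewrite normr0.
by rewrite ger0_norm // (le_trans (ltW sM)) ?ler_norm.
Qed.

End bounded_mfun_nonneg.

Section expectation_nonneg_part.
Context {R : realType} (P : probability R R).
Implicit Types (h : R -> R) (c M m : R).

(* Integrating h (max t 0) instead of h t only requires h to be bounded on
   [0, +oo); since P charges no negative t this changes nothing (integral_max0). *)
Definition Epos h : R := fine (\int[P]_(t in setT) (h (Order.max t 0))%:E).

Lemma max0_ge0 (t : R) : 0 <= Order.max t 0.
Proof. by rewrite le_max lexx orbT. Qed.

Lemma measurable_max0 : measurable_fun setT (fun t : R => Order.max t 0).
Proof. exact: measurable_maxr. Qed.

Lemma integrable_max0 h : bounded_mfun_nonneg h ->
  P.-integrable setT (EFin \o (h \o (fun t => Order.max t 0))).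
Proof.
move=> [mh [K hK]]; apply: measurable_bounded_integrable => //.
- by rewrite (le_lt_trans (probability_le1 P measurableT)) ?ltry.
- exact: measurableT_comp mh measurable_max0.
- exists K; split; first exact: num_real.
  by move=> M KM x _ /=; rewrite (le_trans (hK _ (max0_ge0 x))) ?ltW.
Qed.

Lemma EposE h : bounded_mfun_nonneg h ->
  (\int[P]_(t in setT) (h (Order.max t 0))%:E)%E = (Epos h)%:E.
Proof.
by move=> bh; rewrite fineK //; apply: integrable_fin_num => //; exact: integrable_max0.
Qed.

Lemma ler_Epos h1 h2 : bounded_mfun_nonneg h1 -> bounded_mfun_nonneg h2 ->
  (forall s, 0 <= s -> h1 s <= h2 s) -> Epos h1 <= Epos h2.
Proof.
move=> b1 b2 h12; rewrite -lee_fin -(EposE b1) -(EposE b2).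
apply: le_integral => //; try exact: integrable_max0.
by move=> x _; rewrite lee_fin h12 // max0_ge0.
Qed.

Lemma EposD h1 h2 : bounded_mfun_nonneg h1 -> bounded_mfun_nonneg h2 ->
  Epos (fun s => h1 s + h2 s) = Epos h1 + Epos h2.
Proof.
move=> b1 b2; apply: EFin_inj.
rewrite EFinD -(EposE b1) -(EposE b2) -(EposE (bounded_mfun_nonnegD b1 b2)).
under eq_integral do rewrite EFinD.
by apply: integralD => //; exact: integrable_max0.
Qed.

Lemma EposZ c h : bounded_mfun_nonneg h -> Epos (fun s => c * h s) = c * Epos h.
Proof.
move=> bh; apply: EFin_inj.
rewrite EFinM -(EposE bh) -(EposE (bounded_mfun_nonnegZ c bh)).
under eq_integral do rewrite EFinM.
by apply: integralZl => //; exact: integrable_max0.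
Qed.

Lemma Epos_cst c : Epos (fun _ => c) = c.
Proof. by rewrite /Epos integral_cst //= probability_setT mule1. Qed.

Definition Eclip C mu : R := Epos (fun s => Order.min s (C * mu)).

Lemma EclipZ c C mu : Epos (fun s => c * Order.min s (C * mu)) = c * Eclip C mu.
Proof. exact: EposZ (bounded_mfun_nonneg_min _). Qed.

Hypothesis P_nonneg : P `]-oo, 0[%classic = 0%E.

Lemma integral_max0 h : measurable_fun setT h ->
  (\int[P]_(t in setT) (h t)%:E = \int[P]_(t in setT) (h (Order.max t 0))%:E)%E.
Proof.
move=> mh; apply: ae_eq_integral => //.
- exact/measurable_EFinP.
- by apply/measurable_EFinP; exact: measurableT_comp mh measurable_max0.
- exists `]-oo, 0[%classic; split => // x /= neq; apply: contrapT => x_ge0.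
  by apply: neq => _; rewrite max_l // leNgt; apply: contra_notN x_ge0 => ?; rewrite in_itv.
Qed.

Lemma GclipE C mu : Gclip P C mu = (Eclip C mu - mu)%:E.
Proof.
rewrite /Gclip (integral_max0 (proj1 (bounded_mfun_nonneg_min _))).
by rewrite EFinB -EposE //; exact: bounded_mfun_nonneg_min.
Qed.

Lemma integral_id_lt m :
  (\int[P]_(t in setT) (if t < m then t else 0)%:E)%E = (Epos (id_lt m))%:E.
Proof.
rewrite (integral_max0 (proj1 (bounded_mfun_nonneg_id_lt m))).
by rewrite -EposE //; exact: bounded_mfun_nonneg_id_lt.
Qed.

Lemma prob_itv_ge M : P `[M, +oo[%classic = (Epos (ind_ge M))%:E.
Proof.
have [mind _] := bounded_mfun_nonneg_ind_ge M.
rewrite -EposE; last exact: bounded_mfun_nonneg_ind_ge.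
rewrite -(integral_max0 mind).
rewrite -[X in P X]setIT -integral_indic //; apply: eq_integral => t _.
rewrite indicE /ind_ge; case: ifPn => Mt.
- by rewrite mem_set //= in_itv /= Mt.
- by rewrite memNset //= in_itv /= (negbTE Mt).
Qed.

End expectation_nonneg_part.

Lemma lee_prob_itv_ge_approx {R : realType} (P : probability R R) (m c : R) :
  (forall e, 0 < e -> exists2 M, m - e < M & (c%:E <= P `[M, +oo[%classic)%E) ->
  (c%:E <= P `[m, +oo[%classic)%E.
Proof.
move=> approx.
pose F n : set R := `[m - n.+1%:R^-1, +oo[%classic.
have mF n : measurable (F n) by exact: measurable_itv.
have capF : \bigcap_n F n = `[m, +oo[%classic.
  apply/seteqP; split => x /=.
  - move=> Fx; rewrite in_itv /= andbT leNgt; apply/negP => xm.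
    have [k hk] := ltr_add_invr xm.
    have := Fx k I; rewrite /F /= in_itv /= andbT lerBlDr => /(lt_le_trans hk).
    by rewrite ltxx.
  - rewrite in_itv /= andbT => mx n _; rewrite /F /= in_itv /= andbT.
    by rewrite (le_trans _ mx) // lerBlDr lerDl.
have F_noninc : {homo F : n k / (n <= k)%N >-> (k <= n)%O}.
  move=> n k nk; apply/subsetPset => x; rewrite /F /= !in_itv /= !andbT.
  by apply: le_trans; rewrite lerD2l lerN2 lef_pV2 ?posrE // ler_nat ltnS.
have F0_fin : (P (F 0%N) < +oo)%E.
  by rewrite (le_lt_trans (probability_le1 P (mF 0%N))) ?ltry.
have cvF : P \o F @ \oo --> P (\bigcap_n F n).
  by apply: nonincreasing_cvg_mu => //; exact: bigcap_measurable.
rewrite -capF -(cvg_lim _ cvF) //; apply: lime_ge; first exact: cvgP cvF.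
apply: nearW => n; have [M mM cM] := approx n.+1%:R^-1 ltac:(by []).
rewrite (le_trans cM) // le_measure ?inE //; try exact: measurable_itv.
by move=> x; rewrite /F /= !in_itv /= !andbT => /(le_trans (ltW mM)).
Qed.

Section pointwise_clip_inequalities.
Context {R : realType}.
Implicit Types (C x y a m M mu nu s : R).

Lemma min_scale_le C x y s : 0 < C -> 0 <= x -> x <= y -> 0 <= s ->
  x * Order.min s (C * y) <= y * Order.min s (C * x).
Proof.
move=> C0 x0 xy s0.
by have [?|?] := leP s (C * y); have [?|?] := leP s (C * x); nra.
Qed.

Lemma min_interp_le C nu mu s : 0 < C -> nu / 2 <= mu -> mu <= nu -> 0 <= s ->
  2 * (nu - mu) * Order.min s (C * (nu / 2)) + (2 * mu - nu) * Order.min s (C * nu)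
  <= nu * Order.min s (C * mu).
Proof.
move=> C0 nu_mu mu_nu s0.
have [?|?] := leP s (C * mu); have [?|?] := leP s (C * nu);
  by have [?|?] := leP s (C * (nu / 2)); nra.
Qed.

Lemma min_le_min_ind_gt C nu mu s : 0 < C -> nu <= mu -> 0 <= s ->
  Order.min s (C * mu) <= Order.min s (C * nu) + C * (mu - nu) * ind_gt (C * nu) s.
Proof.
move=> C0 nu_mu s0; rewrite /ind_gt.
case: ifPn => ?; have [?|?] := leP s (C * nu);
  by have [?|?] := leP s (C * mu); nra.
Qed.

Lemma min_ind_ge_le_min a M s : 0 <= a -> a < M -> 0 <= s ->
  Order.min s a + (M - a) * ind_ge M s <= Order.min s M.
Proof.
move=> a0 aM s0; rewrite /ind_ge.
case: ifPn => ?; have [?|?] := leP s a;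
  by have [?|?] := leP s M; lra.
Qed.

Lemma id_lt_min_le_min_half a m s : 0 <= a -> m <= a / 2 -> 0 <= s ->
  id_lt m s + Order.min s a <= 2 * Order.min s (a / 2).
Proof.
move=> a0 ma s0; rewrite /id_lt.
case: ifPn => ?; have [?|?] := leP s a;
  by have [?|?] := leP s (a / 2); lra.
Qed.

Lemma id_lt_ind_ge_le_min_half a m s : 0 <= a -> a / 2 < m -> m <= a -> 0 <= s ->
  id_lt m s + a * ind_ge m s <= 2 * Order.min s (a / 2).
Proof.
move=> a0 am ma s0; rewrite /id_lt /ind_ge.
by case: ifPn => ?; case: ifPn => ?; have [?|?] := leP s (a / 2); lra.
Qed.

Lemma id_lt_ind_gt_le_min a m s : 0 <= a -> m <= a -> 0 <= s ->
  id_lt m s + a * ind_gt a s <= Order.min s a.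
Proof.
move=> a0 ma s0; rewrite /id_lt /ind_gt.
by case: ifPn => ?; case: ifPn => ?; have [?|?] := leP s a; lra.
Qed.

End pointwise_clip_inequalities.

Ltac bounded_mfun_nonneg_tac := repeat first
  [ apply: bounded_mfun_nonnegD | apply: bounded_mfun_nonnegZ
  | apply: bounded_mfun_nonneg_cst | apply: bounded_mfun_nonneg_min
  | apply: bounded_mfun_nonneg_ind_ge | apply: bounded_mfun_nonneg_ind_gt
  | apply: bounded_mfun_nonneg_id_lt ].

Lemma Eclip_scale {R : realType} (P : probability R R) (C x y : R) :
  0 < C -> 0 <= x -> x <= y -> x * Eclip P C y <= y * Eclip P C x.
Proof.
move=> C0 x0 xy; rewrite -!EclipZ.
by apply: ler_Epos => [||s s0]; [bounded_mfun_nonneg_tac..|exact: min_scale_le].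
Qed.

Section clipped_mean.
Context {R : realType} (P : probability R R) (C mu0 : R).
Hypotheses (C_gt1 : 1 < C) (P_nonneg : P `]-oo, 0[%classic = 0%E).
Hypotheses (mu0_clip : is_clipped_mean P C mu0) (mu0_gt0 : 0 < mu0).

Let C_gt0 : 0 < C. Proof. exact: lt_trans ltr01 C_gt1. Qed.
Let Cmu0_ge0 : 0 <= C * mu0. Proof. by rewrite mulr_ge0 // ltW. Qed.

Lemma Eclip_mean : Eclip P C mu0 = mu0.
Proof.
have [_ [+ _]] := mu0_clip; rewrite GclipE // => /eqP.
by rewrite eqe subr_eq0 => /eqP.
Qed.

Lemma Eclip_le_id mu : mu0 <= mu -> Eclip P C mu <= mu.
Proof.
move=> mu0_mu; have := Eclip_scale P C_gt0 (ltW mu0_gt0) mu0_mu.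
by rewrite Eclip_mean [mu * _]mulrC ler_pM2l.
Qed.

Lemma tail_ge_lt M : C * mu0 < M -> Epos P (ind_ge M) < C^-1.
Proof.
move=> aM; rewrite ltNge; apply/negP => tail.
have mu0_nu : mu0 <= M / C by rewrite ler_pdivlMr // mulrC ltW.
suff : M / C <= mu0 by rewrite ler_pdivrMr // mulrC => /(lt_le_trans aM); rewrite ltxx.
have [_ [_ maximal]] := mu0_clip.
apply: maximal; first exact: le_trans (ltW mu0_gt0) mu0_nu.
rewrite GclipE //; apply/eqP; rewrite eqe subr_eq0 eq_le Eclip_le_id //=.
have : Epos P (fun s => Order.min s (C * mu0) + (M - C * mu0) * ind_ge M s)
       <= Eclip P C (M / C).
  rewrite /Eclip [C * (M / C)]mulrC divfK ?gt_eqF //.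
  apply: ler_Epos => [||s s0]; try bounded_mfun_nonneg_tac.
  exact: min_ind_ge_le_min Cmu0_ge0 aM s0.
rewrite EposD ?EposZ; try bounded_mfun_nonneg_tac.
rewrite -/(Eclip P C mu0) Eclip_mean; apply: le_trans.
have : (M - C * mu0) * C^-1 <= (M - C * mu0) * Epos P (ind_ge M).
  by rewrite ler_wpM2l // subr_ge0 ltW.
rewrite mulrBl mulrAC mulfV ?gt_eqF // mul1r; lra.
Qed.

Lemma inv_median_le : inv_median P C <= C * mu0.
Proof.
rewrite /inv_median; set S := [set M | _].
have [supS|] := pselect (has_sup S); last by move/sup_out->.
rewrite leNgt; apply/negP => aS.
have eps_gt0 : 0 < sup S - C * mu0 by rewrite subr_gt0.
have [M [_ tailM]] := sup_adherent eps_gt0 supS.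
rewrite opprB addrCA subrr addr0 => /tail_ge_lt.
by rewrite ltNge -lee_fin -prob_itv_ge // tailM.
Qed.

Lemma inv_median_tail : C^-1 <= Epos P (ind_ge (inv_median P C)).
Proof.
rewrite /inv_median; set S := [set M | _].
have [supS|noS] := pselect (has_sup S).
  rewrite -lee_fin -prob_itv_ge //; apply: lee_prob_itv_ge_approx => e e0.
  by have [M [_ tailM] eM] := sup_adherent e0 supS; exists M.
rewrite sup_out // -[leLHS](Epos_cst P); apply: ler_Epos => [||s s0];
  try bounded_mfun_nonneg_tac.
by rewrite /ind_ge s0 ltW // invf_lt1.
Qed.

Variable alpha : R.
Hypothesis alpha_mu0 : alpha * mu0 <= Epos P (id_lt (inv_median P C)).

Lemma Eclip_half_ge : (1 + alpha) * mu0 <= 2 * Eclip P C (mu0 / 2).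
Proof.
have m_le := inv_median_le; have tail := inv_median_tail; have below := alpha_mu0.
set m := inv_median P C in m_le tail below.
have a_ge0 := Cmu0_ge0; set a := C * mu0 in m_le a_ge0.
rewrite /Eclip mulrA -/a -EposZ; try bounded_mfun_nonneg_tac.
have [m_half|half_m] := leP m (a / 2).
- have : Epos P (fun s => id_lt m s + Order.min s a)
       <= Epos P (fun s => 2 * Order.min s (a / 2)).
    apply: ler_Epos => [||s s0]; try bounded_mfun_nonneg_tac.
    exact: id_lt_min_le_min_half.
  rewrite EposD; try bounded_mfun_nonneg_tac.
  rewrite -/(Eclip P C mu0) Eclip_mean; lra.
- have : Epos P (fun s => id_lt m s + a * ind_ge m s)
       <= Epos P (fun s => 2 * Order.min s (a / 2)).
    apply: ler_Epos => [||s s0]; try bounded_mfun_nonneg_tac.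
    exact: id_lt_ind_ge_le_min_half.
  rewrite EposD ?EposZ; try bounded_mfun_nonneg_tac.
  have : a * C^-1 <= a * Epos P (ind_ge m) by rewrite ler_wpM2l.
  rewrite /a mulrAC mulfV ?gt_eqF // mul1r; lra.
Qed.

Lemma tail_gt_le : C * mu0 * Epos P (ind_gt (C * mu0)) <= (1 - alpha) * mu0.
Proof.
have : Epos P (fun s => id_lt (inv_median P C) s + C * mu0 * ind_gt (C * mu0) s)
       <= Eclip P C mu0.
  apply: ler_Epos => [||s s0]; try bounded_mfun_nonneg_tac.
  exact: id_lt_ind_gt_le_min inv_median_le s0.
rewrite EposD ?EposZ ?Eclip_mean; try bounded_mfun_nonneg_tac.
move: alpha_mu0; lra.
Qed.

Lemma Gclip_ge_small mu : 0 <= mu -> mu <= mu0 / 2 ->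
  ((alpha * mu)%:E <= Gclip P C mu)%E.
Proof.
move=> mu0' mu_half; rewrite GclipE // lee_fin -(ler_pM2l mu0_gt0).
have := Eclip_scale P C_gt0 mu0' mu_half.
have : mu * ((1 + alpha) * mu0) <= mu * (2 * Eclip P C (mu0 / 2)).
  by apply: ler_wpM2l => //; exact: Eclip_half_ge.
lra.
Qed.

Lemma Gclip_ge_mid mu : mu0 / 2 <= mu -> mu <= mu0 ->
  ((alpha * (mu0 - mu))%:E <= Gclip P C mu)%E.
Proof.
move=> half_mu mu_mu0; rewrite GclipE // lee_fin -(ler_pM2l mu0_gt0).
have : Epos P (fun s => 2 * (mu0 - mu) * Order.min s (C * (mu0 / 2)) +
          (2 * mu - mu0) * Order.min s (C * mu0))
       <= Epos P (fun s => mu0 * Order.min s (C * mu)).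
  apply: ler_Epos => [||s s0]; try bounded_mfun_nonneg_tac.
  exact: min_interp_le.
rewrite EposD ?EclipZ ?Eclip_mean; try bounded_mfun_nonneg_tac.
have : (mu0 - mu) * ((1 + alpha) * mu0) <= (mu0 - mu) * (2 * Eclip P C (mu0 / 2)).
  by apply: ler_wpM2l; [rewrite subr_ge0 | exact: Eclip_half_ge].
lra.
Qed.

Lemma Gclip_le_large mu : mu0 <= mu ->
  (Gclip P C mu <= (- (alpha * (mu - mu0)))%:E)%E.
Proof.
move=> mu0_mu; rewrite GclipE // lee_fin.
have tail_le : C * Epos P (ind_gt (C * mu0)) <= 1 - alpha.
  by rewrite -(ler_pM2l mu0_gt0); move: tail_gt_le; lra.
have : (mu - mu0) * (C * Epos P (ind_gt (C * mu0))) <= (mu - mu0) * (1 - alpha).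
  by apply: ler_wpM2l tail_le; rewrite subr_ge0.
have : Eclip P C mu
       <= Epos P (fun s => Order.min s (C * mu0) + C * (mu - mu0) * ind_gt (C * mu0) s).
  apply: ler_Epos => [||s s0]; try bounded_mfun_nonneg_tac.
  exact: min_le_min_ind_gt.
rewrite EposD ?EposZ; try bounded_mfun_nonneg_tac.
rewrite -/(Eclip P C mu0) Eclip_mean; lra.
Qed.

End clipped_mean.

Theorem mainTheorem18 (R : realType) (P : probability R R) (C alpha muPC : R) :
  1 < C ->
  P `]-oo, 0[%classic = 0%E ->
  is_clipped_mean P C muPC ->
  0 < muPC ->
  0 < alpha ->
  ((alpha * muPC)%:E <=
     \int[P]_(t in setT) (if t < inv_median P C then t else 0)%:E)%E ->
  (forall mu : R, 0 <= mu -> mu <= muPC / 2 ->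
     ((alpha * mu)%:E <= Gclip P C mu)%E) /\
  (forall mu : R, muPC / 2 <= mu -> mu <= muPC ->
     ((alpha * (muPC - mu))%:E <= Gclip P C mu)%E) /\
  (forall mu : R, muPC <= mu ->
     (Gclip P C mu <= (- (alpha * (mu - muPC)))%:E)%E).
Proof.
move=> C_gt1 P_nonneg clip mu_gt0 _; rewrite integral_id_lt // lee_fin => below.
split; [|split].
- exact: Gclip_ge_small.
- exact: Gclip_ge_mid.
- exact: Gclip_le_large.
Qed.
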